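(* Let $\phi\in L^2(-1,0)$ and $T>1$, and consider the control problem $$\dot x(t)=x(t-1)+\int_{-1}^0x(t+\tau)\phi(\tau)\,d\tau+u(t),\ t>0,\qquad x(t)=x_0(t),\ t\in(-1,0),\ x(0)=\xi,$$ with initial data $\vec x=(\xi,x_0)\in\mathcal M=\mathbb C\times L^2(-1,0)$. The optimal control depends linearly on the initial data: if $u_1$ and $u_2$ are solutions of the problem $\|u\|_{L^2(0,T)}\to\min$, $u\in U(\vec x;T)$, for $\vec x=\vec x_1$ and $\vec x=\vec x_2$ respectively, then $u_1+u_2$ solves this problem for $\vec x=\vec x_1+\vec x_2$.
   Context: For $u\in L^2(0,T)$ the solution $x(t;\vec x,u)$ is the function equal to $x_0$ on $(-1,0)$ and, for $t\ge0$, absolutely continuous with $x(t)=\xi+\int_0^t\big[x(s-1)+\int_{-1}^0x(s+\tau)\phi(\tau)d\tau+u(s)\big]ds$. $U(\vec x;T)$ is the set of all $u\in L^2(0,T)$ such that $x(t;\vec x,u)=0$ for $t\in(T-1,T)$. *)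

From HB Require Import structures.
From mathcomp Require Import all_boot all_order all_algebra.
From mathcomp Require Import all_classical all_reals all_analysis.
From mathcomp Require Import complex.
Set Implicit Arguments. Unset Strict Implicit. Unset Printing Implicit Defensive.
Import Order.TTheory GRing.Theory Num.Theory.
Import numFieldNormedType.Exports.
Local Open Scope classical_set_scope.
Local Open Scope ring_scope.

Section DelayControl.
Variable R : realType.
Local Notation mu := (@lebesgue_measure R).

Definition cint (D : set R) (f : R -> R[i]) : R[i] :=
  (Rintegral mu D (fun t => complex.Re (f t)) +i*
   Rintegral mu D (fun t => complex.Im (f t)))%C.

Definition cintegrable (D : set R) (f : R -> R[i]) : Prop :=
  mu.-integrable D (fun t => (complex.Re (f t))%:E) /\
  mu.-integrable D (fun t => (complex.Im (f t))%:E).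

Definition csq (z : R[i]) : R := complex.Re z ^+ 2 + complex.Im z ^+ 2.

Definition L2 (D : set R) (f : R -> R[i]) : Prop :=
  measurable_fun D (fun t => complex.Re (f t)) /\
  measurable_fun D (fun t => complex.Im (f t)) /\
  mu.-integrable D (fun t => (csq (f t))%:E).

Definition L2normsq (D : set R) (f : R -> R[i]) : R :=
  Rintegral mu D (fun t => csq (f t)).

Definition delay_rhs (phi u x : R -> R[i]) (s : R) : R[i] :=
  x (s - 1) + cint `]-1, 0[ (fun tau => x (s + tau) * phi tau) + u s.

Definition is_solution (T : R) (phi : R -> R[i]) (xi : R[i]) (x0 u x : R -> R[i])
  : Prop :=
  (forall t, -1 < t < 0 -> x t = x0 t) /\
  (forall s, 0 <= s <= T -> cintegrable `]-1, 0[ (fun tau => x (s + tau) * phi tau)) /\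
  cintegrable `[0, T] (delay_rhs phi u x) /\
  (forall t, 0 <= t <= T -> x t = xi + cint `[0, t] (delay_rhs phi u x)).

(* u \in U((xi,x0); T) : u in L^2(0,T), the solution exists and every
   (i.e. the) solution vanishes on (T-1, T). *)
Definition admissible (T : R) (phi : R -> R[i]) (xi : R[i]) (x0 u : R -> R[i])
  : Prop :=
  L2 `]0, T[ u /\
  (exists x, is_solution T phi xi x0 u x) /\
  (forall x, is_solution T phi xi x0 u x -> forall t, T - 1 < t < T -> x t = 0).

Definition optimal_control (T : R) (phi : R -> R[i]) (xi : R[i]) (x0 u : R -> R[i])
  : Prop :=
  admissible T phi xi x0 u /\
  forall v, admissible T phi xi x0 v -> L2normsq `]0, T[ u <= L2normsq `]0, T[ v.

End DelayControl.

From Pilot Require Import Defs.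
From HB Require Import structures.
From mathcomp Require Import all_boot all_order all_algebra.
From mathcomp Require Import all_classical all_reals all_analysis.
From mathcomp Require Import complex measurable_realfun.
From mathcomp Require Import ring lra.
Set Implicit Arguments. Unset Strict Implicit. Unset Printing Implicit Defensive.
Import Order.TTheory GRing.Theory Num.Theory.
Local Open Scope classical_set_scope.
Local Open Scope ring_scope.
Local Open Scope complex_scope.

(** Solutions depend linearly on initial data and control.  Solutions need not be
    unique, so admissibility asks every solution to vanish on (T-1, T); this survives
    linear combinations because a solution of the homogeneous problem plus a solution
    for an admissible pair is again a solution for that pair.  Hence U(0; T) is a linear
    space and U(x; T) = u + U(0; T) for u in U(x; T).  If u is optimal for x and w lies
    in U(0; T), then t |-> ||u + t w||^2 is minimal at t = 0, so u is orthogonal to w.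
    For optimal u1, u2 and v in U(x1 + x2; T), w := v - (u1 + u2) lies in U(0; T), whence
    ||v||^2 = ||u1 + u2||^2 + ||w||^2. *)

Section RealLinearity.
Context {d} {T : measurableType d} {R : realType} {m : {measure set T -> \bar R}}.
Context {D : set T} (mD : measurable D).

Lemma measurable_fun_lincomb (a b : R) (F G : T -> R) :
  measurable_fun D F -> measurable_fun D G -> measurable_fun D (fun t => a * F t + b * G t).
Proof.
move=> mF mG; apply: measurable_funD; apply: measurable_funM => //; exact: measurable_cst.
Qed.

Lemma integrable_lincomb (a b : R) (F G : T -> R) :
  m.-integrable D (fun t => (F t)%:E) -> m.-integrable D (fun t => (G t)%:E) ->
  m.-integrable D (fun t => (a * F t + b * G t)%:E).
Proof.
move=> iF iG; have := integrableD mD (integrableZl mD a iF) (integrableZl mD b iG).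
by apply: eq_integrable => // t _ /=; rewrite EFinD !EFinM.
Qed.

Lemma Rintegral_lincomb (a b : R) (F G : T -> R) :
  m.-integrable D (fun t => (F t)%:E) -> m.-integrable D (fun t => (G t)%:E) ->
  Rintegral m D (fun t => a * F t + b * G t) = a * Rintegral m D F + b * Rintegral m D G.
Proof.
move=> iF iG; rewrite RintegralD ?RintegralZl //.
- exact: (integrableZl mD a iF).
- exact: (integrableZl mD b iG).
Qed.

End RealLinearity.

Section ComplexLincomb.
Variable R : realType.
Implicit Types (a b : R) (z w : R[i]) (f g : R -> R[i]).

Definition lincomb a b f g : R -> R[i] := fun t => a%:C * f t + b%:C * g t.

Lemma Re_lincombE a b z w :
  complex.Re (a%:C * z + b%:C * w) = a * complex.Re z + b * complex.Re w.
Proof. by case: z => ? ?; case: w => ? ? /=; ring. Qed.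

Lemma Im_lincombE a b z w :
  complex.Im (a%:C * z + b%:C * w) = a * complex.Im z + b * complex.Im w.
Proof. by case: z => ? ?; case: w => ? ? /=; ring. Qed.

End ComplexLincomb.

Section ComplexIntegral.
Variable R : realType.
(* [measurableTypeR R] is the carrier of [lebesgue_measure]; the default structure on [R]
   would not unify with the integrability statements of Defs. *)
Variables (D : set R) (mD : @measurable _ (measurableTypeR R) D).
Implicit Types (a b : R) (f g : R -> R[i]).

Lemma cintegrable_lincomb a b f g :
  cintegrable D f -> cintegrable D g -> cintegrable D (lincomb a b f g).
Proof.
move=> [iRf iIf] [iRg iIg]; split.
- by apply: eq_integrable (integrable_lincomb mD a b iRf iRg) => // t _; rewrite Re_lincombE.
- by apply: eq_integrable (integrable_lincomb mD a b iIf iIg) => // t _; rewrite Im_lincombE.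
Qed.

Lemma cint_lincomb a b f g : cintegrable D f -> cintegrable D g ->
  cint D (lincomb a b f g) = a%:C * cint D f + b%:C * cint D g.
Proof.
move=> [iRf iIf] [iRg iIg]; apply/eqP; rewrite eq_complex Re_lincombE Im_lincombE /=.
rewrite -!Rintegral_lincomb //; apply/andP; split; apply/eqP; apply: eq_Rintegral => t _.
- by rewrite Re_lincombE.
- by rewrite Im_lincombE.
Qed.

Lemma eq_cint f g : {in D, f =1 g} -> cint D f = cint D g.
Proof. by move=> fg; congr (_ +i* _); apply: eq_Rintegral => t tD; rewrite fg. Qed.

Lemma eq_cintegrable f g : {in D, f =1 g} -> cintegrable D f -> cintegrable D g.
Proof.
by move=> fg [iRf iIf]; split; [apply: eq_integrable iRf | apply: eq_integrable iIf]
  => // t tD /=; rewrite fg.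
Qed.

Lemma cintegrableS (E : set R) f : @measurable _ (measurableTypeR R) E -> E `<=` D ->
  cintegrable D f -> cintegrable E f.
Proof.
by move=> mE ED [iRf iIf]; split; [apply: integrableS iRf | apply: integrableS iIf].
Qed.

End ComplexIntegral.

Section L2Geometry.
Variable R : realType.
Local Notation mu := (@lebesgue_measure R).
Implicit Types (a b : R) (z w : R[i]) (D : set R) (f g h : R -> R[i]).

Definition cdot z w : R := complex.Re z * complex.Re w + complex.Im z * complex.Im w.

Definition L2dot D f g : R := Rintegral mu D (fun t => cdot (f t) (g t)).

Lemma csq_ge0 z : 0 <= csq z.
Proof. by rewrite addr_ge0 // sqr_ge0. Qed.

Lemma csq_lincomb a b z w :
  csq (a%:C * z + b%:C * w) = a ^+ 2 * csq z + 2 * a * b * cdot z w + b ^+ 2 * csq w.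
Proof. rewrite /csq /cdot Re_lincombE Im_lincombE; ring. Qed.

Lemma csq_lincomb_le a b z w :
  csq (a%:C * z + b%:C * w) <= 2 * a ^+ 2 * csq z + 2 * b ^+ 2 * csq w.
Proof.
rewrite csq_lincomb /csq /cdot.
have := sqr_ge0 (a * complex.Re z - b * complex.Re w).
have := sqr_ge0 (a * complex.Im z - b * complex.Im w).
nra.
Qed.

Lemma normr_cdot_le z w : `|cdot z w| <= csq z + csq w.
Proof.
rewrite /cdot /csq ler_norml.
have := sqr_ge0 (complex.Re z - complex.Re w); have := sqr_ge0 (complex.Im z - complex.Im w).
have := sqr_ge0 (complex.Re z + complex.Re w); have := sqr_ge0 (complex.Im z + complex.Im w).
move=> *; apply/andP; split; nra.
Qed.

Variables (D : set R) (mD : @measurable _ (measurableTypeR R) D).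

Lemma L2_lincomb a b f g : L2 D f -> L2 D g -> L2 D (lincomb a b f g).
Proof.
move=> Lf Lg; have [mRf [mIf iqf]] := Lf; have [mRg [mIg iqg]] := Lg.
have mRe : measurable_fun D (fun t => complex.Re (lincomb a b f g t)).
  by under eq_fun do rewrite Re_lincombE; exact: measurable_fun_lincomb.
have mIm : measurable_fun D (fun t => complex.Im (lincomb a b f g t)).
  by under eq_fun do rewrite Im_lincombE; exact: measurable_fun_lincomb.
split; [exact: mRe | split; [exact: mIm |]].
apply: (le_integrable mD _ _ (integrable_lincomb mD (2 * a ^+ 2) (2 * b ^+ 2) iqf iqg)).
  by apply/measurable_EFinP; apply: measurable_funD; exact: measurable_funX.
move=> t _; rewrite !abse_EFin lee_fin !ger0_norm ?csq_ge0 ?csq_lincomb_le //.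
by rewrite addr_ge0 // mulr_ge0 ?csq_ge0 // mulr_ge0 // sqr_ge0.
Qed.

Lemma integrable_cdot f g : L2 D f -> L2 D g ->
  mu.-integrable D (fun t => (cdot (f t) (g t))%:E).
Proof.
move=> [mRf [mIf iqf]] [mRg [mIg iqg]].
apply: (le_integrable mD _ _ (integrable_lincomb mD 1 1 iqf iqg)).
  apply/measurable_EFinP; apply: measurable_funD; exact: measurable_funM.
move=> t _; rewrite !abse_EFin lee_fin [X in _ <= X]ger0_norm !mul1r ?normr_cdot_le //.
by rewrite addr_ge0 ?csq_ge0.
Qed.

Lemma L2normsq_lincomb a b f g : L2 D f -> L2 D g ->
  L2normsq D (lincomb a b f g) =
  a ^+ 2 * L2normsq D f + 2 * a * b * L2dot D f g + b ^+ 2 * L2normsq D g.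
Proof.
move=> Lf Lg; have [_ [_ iqf]] := Lf; have [_ [_ iqg]] := Lg.
have idot := integrable_cdot Lf Lg.
rewrite /L2normsq /L2dot; transitivity (Rintegral mu D (fun t =>
  a ^+ 2 * csq (f t) + 1 * (2 * a * b * cdot (f t) (g t) + b ^+ 2 * csq (g t)))).
  by apply: eq_Rintegral => t _; rewrite csq_lincomb mul1r addrA.
by rewrite !Rintegral_lincomb ?mul1r ?addrA //; exact: integrable_lincomb.
Qed.

Lemma L2dotDl f g h : L2 D f -> L2 D g -> L2 D h ->
  L2dot D (fun t => f t + g t) h = L2dot D f h + L2dot D g h.
Proof.
move=> Lf Lg Lh; rewrite /L2dot -RintegralD ?integrable_cdot //.
by apply: eq_Rintegral => t _; rewrite /cdot !raddfD /=; ring.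
Qed.

Lemma L2normsq_ge0 f : 0 <= L2normsq D f.
Proof. by apply: Rintegral_ge0 => t _; exact: csq_ge0. Qed.

End L2Geometry.

Lemma quadratic_ge0_lin_coef_eq0 (R : realFieldType) (c q : R) :
  (forall t, 0 <= 2 * t * c + t ^+ 2 * q) -> c = 0.
Proof.
move=> ge0; pose s := `|q| + 1.
have s_gt0 : 0 < s by rewrite /s ltr_wpDl.
have : 0 <= c ^+ 2 * (q - 2 * s).
  have -> : c ^+ 2 * (q - 2 * s) = s ^+ 2 * (2 * (- c / s) * c + (- c / s) ^+ 2 * q).
    by field; rewrite gt_eqF.
  by rewrite mulr_ge0 ?sqr_ge0.
have := ler_norm q; have := normr_ge0 q; have := sqr_ge0 c; rewrite /s => *.
by apply/eqP; rewrite -sqrf_eq0 eq_le sqr_ge0 andbT; nra.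
Qed.

Local Ltac lincomb_ring := rewrite /lincomb /= ?rmorph0 ?rmorphN ?rmorph1; ring.

Section Admissibility.
Variables (R : realType) (T : R) (phi : R -> R[i]).
Implicit Types (a b : R) (xi eta : R[i]) (u v w h x y z : R -> R[i]).

Lemma lincomb_shiftM a b x y s :
  (fun tau => lincomb a b x y (s + tau) * phi tau) =
  lincomb a b (fun tau => x (s + tau) * phi tau) (fun tau => y (s + tau) * phi tau).
Proof. by apply/funext => tau; rewrite /lincomb mulrDl !mulrA. Qed.

Lemma delay_rhs_lincomb a b u v x y s :
  cintegrable `]-1, 0[ (fun tau => x (s + tau) * phi tau) ->
  cintegrable `]-1, 0[ (fun tau => y (s + tau) * phi tau) ->
  delay_rhs phi (lincomb a b u v) (lincomb a b x y) s =
  lincomb a b (delay_rhs phi u x) (delay_rhs phi v y) s.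
Proof.
by move=> ix iy; rewrite /delay_rhs lincomb_shiftM cint_lincomb // /lincomb; ring.
Qed.

Lemma is_solution_lincomb a b xi eta x0 y0 u v x y :
  is_solution T phi xi x0 u x -> is_solution T phi eta y0 v y ->
  is_solution T phi (a%:C * xi + b%:C * eta) (lincomb a b x0 y0) (lincomb a b u v)
    (lincomb a b x y).
Proof.
move=> [x_init [x_mem [x_rhs x_eq]]] [y_init [y_mem [y_rhs y_eq]]].
have rhs_lincomb t : t <= T ->
    {in `[0, t]%classic, delay_rhs phi (lincomb a b u v) (lincomb a b x y) =1
                         lincomb a b (delay_rhs phi u x) (delay_rhs phi v y)}.
  move=> tT s; rewrite inE /= in_itv /= => /andP[s0 st].
  by apply: delay_rhs_lincomb; [apply: x_mem | apply: y_mem]; rewrite s0 (le_trans st).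
have sub0T t : t <= T -> `[0, t] `<=` `[0, T].
  by move=> tT; apply: subset_itvl; rewrite bnd_simp.
split; first by move=> t ht; rewrite /lincomb x_init // y_init.
split.
  move=> s hs; rewrite lincomb_shiftM.
  by apply: cintegrable_lincomb; [| exact: x_mem | exact: y_mem].
split.
  apply: eq_cintegrable (cintegrable_lincomb _ a b x_rhs y_rhs) => //.
  by move=> s sT; rewrite (rhs_lincomb T).
move=> t /andP[t0 tT].
rewrite (eq_cint (rhs_lincomb t tT)) cint_lincomb //.
- by rewrite /lincomb x_eq ?t0 // y_eq ?t0 //; ring.
- by apply: cintegrableS x_rhs => //; exact: sub0T.
- by apply: cintegrableS y_rhs => //; exact: sub0T.
Qed.

Lemma eq_is_solution xi xi' x0 x0' u u' x x' :
  xi = xi' -> x0 =1 x0' -> u =1 u' -> x =1 x' ->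
  is_solution T phi xi x0 u x -> is_solution T phi xi' x0' u' x'.
Proof. by move=> <- /funext <- /funext <- /funext <-. Qed.

Lemma eq_admissible xi xi' x0 x0' u u' : xi = xi' -> x0 =1 x0' -> u =1 u' ->
  admissible T phi xi x0 u -> admissible T phi xi' x0' u'.
Proof. by move=> <- /funext <- /funext <-. Qed.

Lemma null_solution_vanishes xi x0 u h : admissible T phi xi x0 u ->
  is_solution T phi 0 (fun=> 0) (fun=> 0) h -> forall t, T - 1 < t < T -> h t = 0.
Proof.
move=> [_ [[x sx] vanish]] sh t ht.
have sxh : is_solution T phi xi x0 u (lincomb 1 1 h x).
  by apply: eq_is_solution (is_solution_lincomb 1 1 sh sx) => [|s|s|s]; lincomb_ring.
by have := vanish _ sxh t ht; rewrite /lincomb (vanish _ sx t ht) rmorph1 !mul1r addr0.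
Qed.

Lemma admissible_lincomb a b xi eta x0 y0 u v :
  admissible T phi xi x0 u -> admissible T phi eta y0 v ->
  admissible T phi (a%:C * xi + b%:C * eta) (lincomb a b x0 y0) (lincomb a b u v).
Proof.
move=> adm_u adm_v; have [Lu [[x sx] x_van]] := adm_u; have [Lv [[y sy] y_van]] := adm_v.
split; first exact: L2_lincomb.
split; first by exists (lincomb a b x y); exact: is_solution_lincomb.
move=> z sz t ht.
have sh : is_solution T phi 0 (fun=> 0) (fun=> 0) (lincomb 1 (-1) z (lincomb a b x y)).
  apply: eq_is_solution (is_solution_lincomb 1 (-1) sz (is_solution_lincomb a b sx sy))
    => [|s|s|s]; lincomb_ring.
have := null_solution_vanishes adm_u sh ht.
by rewrite /lincomb (x_van x sx t ht) (y_van y sy t ht) !(mulr0, addr0) rmorph1 mul1r.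
Qed.

Lemma optimal_control_orthogonal xi x0 u w :
  optimal_control T phi xi x0 u -> admissible T phi 0 (fun=> 0) w ->
  L2dot `]0, T[ u w = 0.
Proof.
move=> [adm_u u_min] adm_w; have [Lu _] := adm_u; have [Lw _] := adm_w.
apply: (@quadratic_ge0_lin_coef_eq0 _ _ (L2normsq `]0, T[ w)) => t.
have adm_ut : admissible T phi xi x0 (lincomb 1 t u w).
  by apply: eq_admissible (admissible_lincomb 1 t adm_u adm_w) => [|s|s]; lincomb_ring.
by have := u_min _ adm_ut; rewrite L2normsq_lincomb // expr1n; lra.
Qed.

End Admissibility.

Theorem corollary1 (R : realType) (phi : R -> R[i]) (T : R)
  (xi1 xi2 : R[i]) (x01 x02 u1 u2 : R -> R[i]) :
  L2 `]-1, 0[ phi -> 1 < T ->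
  L2 `]-1, 0[ x01 -> L2 `]-1, 0[ x02 ->
  optimal_control T phi xi1 x01 u1 ->
  optimal_control T phi xi2 x02 u2 ->
  optimal_control T phi (xi1 + xi2) (fun t => x01 t + x02 t) (fun t => u1 t + u2 t).
Proof.
move=> _ _ _ _ opt1 opt2; have [adm1 _] := opt1; have [adm2 _] := opt2.
have adm12 : admissible T phi (xi1 + xi2) (fun t => x01 t + x02 t) (fun t => u1 t + u2 t).
  by apply: eq_admissible (admissible_lincomb 1 1 adm1 adm2) => [|s|s]; lincomb_ring.
split=> // v adm_v.
have adm_w : admissible T phi 0 (fun=> 0) (lincomb 1 (-1) v (fun t => u1 t + u2 t)).
  by apply: eq_admissible (admissible_lincomb 1 (-1) adm_v adm12) => [|s|s]; lincomb_ring.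
set w := lincomb 1 (-1) v _ in adm_w.
have [Lu1 _] := adm1; have [Lu2 _] := adm2; have [Lu12 _] := adm12; have [Lw _] := adm_w.
have -> : v = lincomb 1 1 (fun t => u1 t + u2 t) w.
  by apply/funext => s; rewrite /w; lincomb_ring.
rewrite L2normsq_lincomb // L2dotDl // (optimal_control_orthogonal opt1 adm_w)
  (optimal_control_orthogonal opt2 adm_w).
by have := L2normsq_ge0 `]0, T[ w; rewrite expr1n; lra.
Qed.
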